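(* Consider the discrete-time LPV system $x_{k+1}=A(p_k)x_k+B(p_k)u_k$ with affine $A(p)=A_0+\sum_{i=1}^{n_p}p_iA_i$, $B(p)=B_0+\sum_{i=1}^{n_p}p_iB_i$, and a data set $\mathcal{D}$ from it such that $\mathcal{D}_p$ has full row rank $(1+n_p)(n_x+n_u)$. Let $\gamma>0$, $Q\succeq0$, $R\succ0$. Suppose there exist $P\in\mathbb{S}^{n_x}$ with $P\succ0$, $\Xi\in\mathbb{S}^{4n_pn_x}$, $F_Q\in\mathbb{R}^{(N_d-1)(1+n_p)\times n_x(1+n_p)}$ with an associated $\mathcal{F}\in\mathbb{R}^{(N_d-1)\times n_x(1+n_p+n_p^2)}$ satisfying $\mathcal{F}[I_{n_x};\,p\otimes I_{n_x};\,p\otimes p\otimes I_{n_x}]=[I_{N_d-1};\,p\otimes I_{N_d-1}]^\top F_Q[I_{n_x};\,p\otimes I_{n_x}]$ for all $p\in\mathbb{P}$, and $\mathcal{Y}=[Y_0\ \bar Y]$ with $Y_0\in\mathbb{R}^{n_u\times n_x}$, $\bar Y\in\mathbb{R}^{n_u\times n_xn_p}$, such that $$\begin{bmatrix}P&0&0\\0&I_{n_p}\otimes P&0\\ Y_0&\bar Y&0\\ 0& I_{n_p}\otimes Y_0& I_{n_p}\otimes\bar Y\end{bmatrix}=\mathcal{D}_p\mathcal{F}$$ and the full-block LMI conditions (defined in the context) hold for all $p\in\mathbb{P}$ with $\Delta(p)=\mathrm{diag}(p)\otimes I_{2n_x}$, $$W=\begin{bmatrix}P_0&(\mathcal{X}_+F_Q)^\top&[Q^{1/2}P\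 \ 0]^\top&(R^{1/2}\mathcal{Y})^\top&0\\ \mathcal{X}_+F_Q&P_0&0&0&[I_{n_x}\ 0]^\top\\ [Q^{1/2}P\ \ 0]&0&\gamma I_{n_x}&0&0\\ R^{1/2}\mathcal{Y}&0&0&\gamma I_{n_u}&0\\ 0&[I_{n_x}\ 0]&0&0&\gamma I_{n_x}\end{bmatrix},$$ $P_0=\mathrm{blkdiag}(P,0_{n_xn_p})$, $\mathcal{X}_+=\mathrm{blkdiag}(X_+,I_{n_p}\otimes X_+)$, $L_{11}=0_{2n_xn_p}$, $L_{12}=[1_{n_p}\otimes I_{2n_x}\ \ 0_{2n_xn_p\times(2n_x+n_u)}]$, $L_{21}=\begin{bmatrix}0_{n_x\times 2n_xn_p}\\ I_{n_p}\otimes[I_{n_x}\ 0]\\ 0_{n_x\times 2n_xn_p}\\ I_{n_p}\otimes[0\ I_{n_x}]\\ 0_{(2n_x+n_u)\times 2n_xn_p}\end{bmatrix}$, $L_{22}=\begin{bmatrix}[I_{n_x}\ 0]&0\\ 1_{n_p}\otimes 0_{n_x\times 2n_x}&0\\ [0\ I_{n_x}]&0\\ 1_{n_p}\otimes 0_{n_x\times 2n_x}&0\\ 0&I_{2n_x+n_u}\end{bmatrix}$. Then the LPV state-feedback controller $K(p)=K_0+\sum_{i=1}^{n_p}p_iK_i$ with $K_0=Y_0P^{-1}$, $[K_1\ \cdots\ K_{n_p}]=\bar Y(I_{n_p}\otimes P)^{-1}$ stabilizes the system and the closed-loop generalized plant $x_{k+1}=(A(p_k)+B(p_k)K(p_k))x_k+w_k$,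 $z_k=\begin{bmatrix}Q^{1/2}\\ R^{1/2}K(p_k)\end{bmatrix}x_k$ has $\ell_2$-gain less than $\gamma$.
   Context: Notation: $\otimes$ Kronecker product; $I_n$ identity; $0_{n\times m}$, $0_n$ zero matrices; $1_n$ the all-ones vector; $\mathbb{S}^n$ real symmetric matrices; $\mathrm{blkdiag}$ block-diagonal concatenation; $\mathrm{diag}(p)$ diagonal matrix of entries of $p$; $[a;b]$ vertical stacking. The system has fully measured state $x_k\in\mathbb{R}^{n_x}$, input $u_k\in\mathbb{R}^{n_u}$, scheduling $p_k\in\mathbb{P}\subset\mathbb{R}^{n_p}$, $\mathbb{P}$ compact and convex; $A_i,B_i$ unknown real matrices. $\mathcal{D}=\{u^d_k,p^d_k,x^d_k\}_{k=1}^{N_d}$ is a trajectory of the system; $U=[u^d_1\cdots u^d_{N_d-1}]$, $U^p=[p^d_1\otimes u^d_1\cdots p^d_{N_d-1}\otimes u^d_{N_d-1}]$, $X=[x^d_1\cdots x^d_{N_d-1}]$, $X^p=[p^d_1\otimes x^d_1\cdots p^d_{N_d-1}\otimes x^d_{N_d-1}]$, $X_+=[x^d_2\cdots x^d_{N_d}]$, $\mathcal{D}_p=[X^\top\ (X^p)^\top\ U^\top\ (U^p)^\top]^\top$. Stabilizing means asymptotic stability of $x_{k+1}=(A(p_k)+B(p_k)K(p_k))x_k$ for all scheduling trajectories in $\mathbb{P}$. The $\ell_2$-gain of the plant is the infimum of $\gamma>0$ such that $\|z\|_2\le\gamma\|w\|_2$ for all its trajectories with $x_0=0$ (and all scheduling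 trajectories in $\mathbb{P}$), where $\|\cdot\|_2$ is the $\ell_2$-norm of a signal. Full-block LMI conditions for given $(\Delta(p),W,L_{11},L_{12},L_{21},L_{22})$ and symmetric $\Xi$: $\begin{bmatrix}L_{11}&L_{12}\\ I&0\end{bmatrix}^\top\Xi\begin{bmatrix}L_{11}&L_{12}\\ I&0\end{bmatrix}-\begin{bmatrix}L_{21}&L_{22}\end{bmatrix}^\top W\begin{bmatrix}L_{21}&L_{22}\end{bmatrix}\prec0$ and $\begin{bmatrix}I\\ \Delta(p)\end{bmatrix}^\top\Xi\begin{bmatrix}I\\ \Delta(p)\end{bmatrix}\succeq0$ for all $p\in\mathbb{P}$. *)

From HB Require Import structures.
From mathcomp Require Import all_boot all_order all_algebra.
From mathcomp Require Import mxtens.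
From mathcomp Require Import all_classical all_reals all_analysis.
Set Implicit Arguments.
Unset Strict Implicit.
Unset Printing Implicit Defensive.
Import Order.TTheory GRing.Theory Num.Theory.
Import numFieldNormedType.Exports.
Local Open Scope ring_scope.

(* [kron A B] is the Kronecker product A (x) B : 'M_(m*p, n*q), with the
   standard index convention (i,k) |-> i*p + k (mxtens_index). *)
Definition kron {R : pzRingType} {m n p q : nat}
  (A : 'M[R]_(m, n)) (B : 'M[R]_(p, q)) : 'M[R]_(m * p, n * q) := tensmx A B.

Definition kronv {R : pzRingType} {m a b : nat}
  (v : 'cV[R]_m) (A : 'M[R]_(a, b)) : 'M[R]_(m * a, b) :=
  castmx (erefl, mul1n b) (kron v A).

Definition quadf {R : pzRingType} {n} (M : 'M[R]_n) (x : 'cV[R]_n) : R :=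
  (x^T *m M *m x) ord0 ord0.
Definition posdef {R : numDomainType} {n} (M : 'M[R]_n) : Prop :=
  M^T = M /\ forall x : 'cV[R]_n, x != 0 -> 0 < quadf M x.
Definition possemidef {R : numDomainType} {n} (M : 'M[R]_n) : Prop :=
  M^T = M /\ forall x : 'cV[R]_n, 0 <= quadf M x.
Definition negdef {R : numDomainType} {n} (M : 'M[R]_n) : Prop :=
  posdef (- M).

(* M(p) = M_0 + \sum_{i=1}^{n_p} p_i M_i  (indices shifted to 0..np-1) *)
Definition affmx {R : pzRingType} {np m n : nat}
  (M0 : 'M[R]_(m, n)) (Mi : 'I_np -> 'M[R]_(m, n)) (p : 'cV[R]_np)
  : 'M[R]_(m, n) := M0 + \sum_(i < np) p i ord0 *: Mi i.

Definition colblock {R : Type} {nu np nx : nat}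
  (K : 'M[R]_(nu, np * nx)) (i : 'I_np) : 'M[R]_(nu, nx) :=
  \matrix_(r, c) K r (mxtens_index (i, c)).

(* samples are indexed 0..N (N = N_d - 1 columns); column j holds sample j *)
Definition dmx {R : Type} {n : nat} (N : nat) (v : nat -> 'cV[R]_n)
  : 'M[R]_(n, N) := \matrix_(i, j) v j i ord0.
Definition dmxp {R : pzRingType} {np n : nat} (N : nat)
  (p : nat -> 'cV[R]_np) (v : nat -> 'cV[R]_n) : 'M[R]_(np * n, N) :=
  \matrix_(i, j) kronv (p j) (v j) i ord0.
Definition Dp {R : pzRingType} {nx nu np : nat} (N : nat)
  (xd : nat -> 'cV[R]_nx) (ud : nat -> 'cV[R]_nu) (pd : nat -> 'cV[R]_np)
  : 'M[R]_(nx + np * nx + nu + np * nu, N) :=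
  col_mx (col_mx (col_mx (dmx N xd) (dmxp N pd xd)) (dmx N ud)) (dmxp N pd ud).
(* X_+ = [x_2 ... x_{N_d}] *)
Definition Xplus {R : Type} {nx : nat} (N : nat) (xd : nat -> 'cV[R]_nx)
  : 'M[R]_(nx, N) := dmx N (fun k => xd k.+1).

Fixpoint traj {R : pzRingType} {n : nat} (M : nat -> 'M[R]_n)
  (w : nat -> 'cV[R]_n) (x0 : 'cV[R]_n) (k : nat) : 'cV[R]_n :=
  match k with
  | 0 => x0
  | k'.+1 => M k' *m traj M w x0 k' + w k'
  end.

Definition vnorm {R : rcfType} {n : nat} (x : 'cV[R]_n) : R :=
  Num.sqrt (\sum_(i < n) x i ord0 ^+ 2).

Definition asym_stable {R : rcfType} {n : nat} (M : nat -> 'M[R]_n) : Prop :=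
  (forall eps : R, 0 < eps -> exists2 delta : R, 0 < delta &
     forall x0, vnorm x0 < delta -> forall k, vnorm (traj M (fun=> 0) x0 k) < eps)
  /\
  (exists2 delta : R, 0 < delta & forall x0, vnorm x0 < delta ->
     forall eps : R, 0 < eps -> exists K : nat, forall k, (K <= k)%N ->
       vnorm (traj M (fun=> 0) x0 k) < eps).

Definition l2norm {R : realType} {n : nat} (w : nat -> 'cV[R]_n) : \bar R :=
  sqrte (\sum_(0 <= k <oo) ((vnorm (w k)) ^+ 2)%:E)%E.

Definition l2_gain {R : realType} {n np nz : nat} (Pset : set 'cV[R]_np)
  (M : 'cV[R]_np -> 'M[R]_n) (C : 'cV[R]_np -> 'M[R]_(nz, n)) : \bar R :=
  ereal_inf [set g%:E | g in [set g : R | 0 < g /\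
     forall (p : nat -> 'cV[R]_np) (w : nat -> 'cV[R]_n),
       (forall k, Pset (p k)) ->
       (l2norm (fun k => C (p k) *m traj (fun k => M (p k)) w 0 k)
          <= g%:E * l2norm w)%E]].

Section FB.
Context {R : realType} (nx nu np N : nat).
Local Notation n1 := (nx + np * nx)%N.
Local Notation d := (nx + nx)%N.
Local Notation s := (nx + nu + nx)%N.
Local Notation m := (np * d)%N.

Definition Delta (p : 'cV[R]_np) : 'M[R]_m := kron (diag_mx p^T) (1%:M : 'M[R]_d).

Definition L11 : 'M[R]_m := 0.
Definition L12 : 'M[R]_(m, d + s) :=
  row_mx (kronv (const_mx 1 : 'cV[R]_np) (1%:M : 'M[R]_d)) 0.
Definition Lup : 'M[R]_(m + m, m + (d + s)) := block_mx L11 L12 1%:M 0.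

Definition L21 : 'M[R]_(n1 + n1 + s, m) :=
  col_mx
    (col_mx (col_mx 0 (kron (1%:M : 'M[R]_np) (row_mx 1%:M 0 : 'M[R]_(nx, d))))
            (col_mx 0 (kron (1%:M : 'M[R]_np) (row_mx 0 1%:M : 'M[R]_(nx, d)))))
    0.
Definition L22 : 'M[R]_(n1 + n1 + s, d + s) :=
  col_mx
    (col_mx (col_mx (row_mx (row_mx 1%:M 0 : 'M[R]_(nx, d)) 0) 0)
            (col_mx (row_mx (row_mx 0 1%:M : 'M[R]_(nx, d)) 0) 0))
    (row_mx 0 1%:M).
Definition Llow : 'M[R]_(n1 + n1 + s, m + (d + s)) := row_mx L21 L22.

Definition Wmx (gamma : R) (P : 'M[R]_nx) (FQ : 'M[R]_(N + np * N, n1))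
  (Xp : 'M[R]_(nx, N)) (Qh : 'M[R]_nx) (Rh : 'M[R]_nu)
  (Y0 : 'M[R]_(nu, nx)) (Ybar : 'M[R]_(nu, np * nx)) : 'M[R]_(n1 + n1 + s) :=
  let P0 : 'M[R]_n1 := block_mx P 0 0 (0 : 'M[R]_(np * nx)) in
  let Xcal : 'M[R]_(n1, N + np * N) :=
    block_mx Xp 0 0 (kron (1%:M : 'M[R]_np) Xp) in
  let XF : 'M[R]_n1 := Xcal *m FQ in
  let QP : 'M[R]_(nx, n1) := row_mx (Qh *m P) 0 in
  let RY : 'M[R]_(nu, n1) := Rh *m row_mx Y0 Ybar in
  let E : 'M[R]_(nx, n1) := row_mx 1%:M 0 in
  block_mx
    (block_mx P0 XF^T XF P0)
    (col_mx (row_mx (row_mx QP^T RY^T) 0) (row_mx (row_mx 0 0) E^T))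
    (col_mx (col_mx (row_mx QP 0) (row_mx RY 0)) (row_mx 0 E))
    (block_mx (block_mx (gamma%:M : 'M[R]_nx) 0 0 (gamma%:M : 'M[R]_nu)) 0 0
              (gamma%:M : 'M[R]_nx)).

Definition lhs_blk (P : 'M[R]_nx) (Y0 : 'M[R]_(nu, nx))
  (Ybar : 'M[R]_(nu, np * nx))
  : 'M[R]_(nx + np * nx + nu + np * nu, n1 + np * (np * nx)) :=
  col_mx
    (col_mx
      (col_mx (row_mx (row_mx P 0) 0)
              (row_mx (row_mx 0 (kron (1%:M : 'M[R]_np) P)) 0))
      (row_mx (row_mx Y0 Ybar) 0))
    (row_mx (row_mx 0 (kron (1%:M : 'M[R]_np) Y0)) (kron (1%:M : 'M[R]_np) Ybar)).
End FB.

(* The data equations give X_+ = [A0 Abar B0 Bbar] D_p, so the equality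
   constraint on F turns G(p)^T Xcal_+ F_Q G(p), with G(p) = [I; p (x) I], into
   the unknown closed loop (A(p) + B(p) K(p)) P.  Evaluating the strict
   full-block LMI on vectors whose multiplier part is Delta(p) L12 v, the
   multiplier condition removes the Xi-term and leaves W uniformly positive.
   Substituting P^-1 x, P^-1 x_+, the performance output and the disturbance
   turns this into a strict dissipation inequality for V(x) = x^T P^-1 x with
   supply rate gamma |w|^2 - gamma^-1 |z|^2.  With w = 0 it makes V decay
   geometrically, which gives asymptotic stability; summed along trajectories
   from x_0 = 0 it bounds the l2-gain by a constant strictly below gamma. *)

From HB Require Import structures.
From mathcomp Require Import all_boot all_order all_algebra.
From mathcomp Require Import mxtens.
From mathcomp Require Import all_classical all_reals all_analysis.
From mathcomp Require Import ring lra.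
Import Order.TTheory GRing.Theory Num.Theory.
Import numFieldNormedType.Exports.
Set Implicit Arguments.
Unset Strict Implicit.
Unset Printing Implicit Defensive.
Local Open Scope ring_scope.

Section VectorDot.
Variable R : comPzRingType.

Definition vdot n (u v : 'cV[R]_n) : R := (u^T *m v) 0 0.
Definition sqnorm n (u : 'cV[R]_n) : R := vdot u u.

Lemma vdotE n (u v : 'cV[R]_n) : vdot u v = \sum_i u i 0 * v i 0.
Proof. by rewrite /vdot mxE; apply: eq_bigr => i _; rewrite mxE. Qed.

Lemma vdotC n (u v : 'cV[R]_n) : vdot u v = vdot v u.
Proof. by rewrite !vdotE; apply: eq_bigr => i _; rewrite mulrC. Qed.

Lemma vdotDl n (u v w : 'cV[R]_n) : vdot (u + v) w = vdot u w + vdot v w.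
Proof. by rewrite !vdotE -big_split; apply: eq_bigr => i _; rewrite !mxE mulrDl. Qed.

Lemma vdotDr n (u v w : 'cV[R]_n) : vdot w (u + v) = vdot w u + vdot w v.
Proof. by rewrite !(vdotC w) vdotDl. Qed.

Lemma vdotNl n (u w : 'cV[R]_n) : vdot (- u) w = - vdot u w.
Proof. by rewrite !vdotE -sumrN; apply: eq_bigr => i _; rewrite !mxE mulNr. Qed.

Lemma vdotNr n (u w : 'cV[R]_n) : vdot w (- u) = - vdot w u.
Proof. by rewrite !(vdotC w) vdotNl. Qed.

Lemma vdotZl n a (u w : 'cV[R]_n) : vdot (a *: u) w = a * vdot u w.
Proof. by rewrite !vdotE mulr_sumr; apply: eq_bigr => i _; rewrite !mxE mulrA. Qed.

Lemma vdotZr n a (u w : 'cV[R]_n) : vdot w (a *: u) = a * vdot w u.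
Proof. by rewrite !(vdotC w) vdotZl. Qed.

Lemma vdot0l n (w : 'cV[R]_n) : vdot 0 w = 0.
Proof. by rewrite vdotE big1 // => i _; rewrite mxE mul0r. Qed.

Lemma vdot0r n (w : 'cV[R]_n) : vdot w 0 = 0.
Proof. by rewrite vdotC vdot0l. Qed.

Lemma vdot_mulmxr n m (u : 'cV[R]_n) (A : 'M[R]_(n, m)) v :
  vdot u (A *m v) = vdot (A^T *m u) v.
Proof. by rewrite /vdot trmx_mul trmxK mulmxA. Qed.

Lemma vdot_trmxC n m (u : 'cV[R]_n) (A : 'M[R]_(m, n)) v :
  vdot u (A^T *m v) = vdot v (A *m u).
Proof. by rewrite vdot_mulmxr trmxK vdotC. Qed.

Lemma vdot_col_mx n1 n2 (u1 v1 : 'cV[R]_n1) (u2 v2 : 'cV[R]_n2) :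
  vdot (col_mx u1 u2) (col_mx v1 v2) = vdot u1 v1 + vdot u2 v2.
Proof. by rewrite /vdot tr_col_mx mul_row_col mxE. Qed.

Lemma sqnorm0 n : sqnorm (0 : 'cV[R]_n) = 0.
Proof. exact: vdot0l. Qed.

Lemma sqnorm_col_mx n1 n2 (u1 : 'cV[R]_n1) (u2 : 'cV[R]_n2) :
  sqnorm (col_mx u1 u2) = sqnorm u1 + sqnorm u2.
Proof. exact: vdot_col_mx. Qed.

Lemma sqnormZ n a (u : 'cV[R]_n) : sqnorm (a *: u) = a ^+ 2 * sqnorm u.
Proof. by rewrite /sqnorm vdotZl vdotZr mulrA expr2. Qed.

Lemma sqnormN n (u : 'cV[R]_n) : sqnorm (- u) = sqnorm u.
Proof. by rewrite /sqnorm vdotNl vdotNr opprK. Qed.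

Lemma quadfE n (M : 'M[R]_n) x : quadf M x = vdot x (M *m x).
Proof. by rewrite /quadf /vdot mulmxA. Qed.

Lemma quadfN n (M : 'M[R]_n) x : quadf (- M) x = - quadf M x.
Proof. by rewrite !quadfE mulNmx vdotNr. Qed.

Lemma quadfB n (M N : 'M[R]_n) x : quadf (M - N) x = quadf M x - quadf N x.
Proof. by rewrite !quadfE mulmxBl vdotDr vdotNr. Qed.

Lemma quadf_mulmx n m (C : 'M[R]_(n, m)) M x :
  quadf (C^T *m M *m C) x = quadf M (C *m x).
Proof. by rewrite !quadfE -!mulmxA vdot_mulmxr trmxK. Qed.

End VectorDot.

Section RealVectorDot.
Variable R : realFieldType.

Lemma sqnorm_ge0 n (u : 'cV[R]_n) : 0 <= sqnorm u.
Proof. by rewrite /sqnorm vdotE sumr_ge0 // => i _; rewrite -expr2 sqr_ge0. Qed.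

Lemma sqr_entry_le_sqnorm n (u : 'cV[R]_n) i : u i 0 ^+ 2 <= sqnorm u.
Proof.
rewrite /sqnorm vdotE (bigD1 i) //= -expr2 lerDl sumr_ge0 // => j _.
by rewrite -expr2 sqr_ge0.
Qed.

Lemma sqr_sum_mul_le n (c u : 'I_n -> R) :
  (\sum_i c i * u i) ^+ 2 <= (\sum_i c i ^+ 2) * (\sum_i u i ^+ 2).
Proof.
have -> : (\sum_i c i * u i) ^+ 2 = \sum_i \sum_j c i * u i * (c j * u j).
  by rewrite expr2 mulr_suml; apply: eq_bigr => i _; rewrite mulr_sumr.
have E1 : (\sum_i c i ^+ 2) * (\sum_i u i ^+ 2) = \sum_i \sum_j c i ^+ 2 * u j ^+ 2.
  by rewrite mulr_suml; apply: eq_bigr => i _; rewrite mulr_sumr.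
have E2 : (\sum_i c i ^+ 2) * (\sum_i u i ^+ 2) = \sum_i \sum_j c j ^+ 2 * u i ^+ 2.
  by rewrite E1 exchange_big.
suff : 2 * (\sum_i \sum_j c i * u i * (c j * u j)) <=
       (\sum_i c i ^+ 2) * (\sum_i u i ^+ 2) + (\sum_i c i ^+ 2) * (\sum_i u i ^+ 2).
  by move=> h; lra.
rewrite {1}E1 E2 -big_split /= mulr_sumr ler_sum // => i _.
rewrite -big_split /= mulr_sumr ler_sum // => j _.
have := sqr_ge0 (c i * u j - c j * u i); nra.
Qed.

Lemma quadf_le_sqnorm n (M : 'M[R]_n) :
  exists2 C : R, 0 < C & forall x, quadf M x <= C * sqnorm x.
Proof.
set S := \sum_i \sum_j `|M i j|.
have S_ge0 : 0 <= S by do 2 (apply: sumr_ge0 => ? _).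
exists (1 + S) => [|x]; first lra.
suff : quadf M x <= S * sqnorm x by have := sqnorm_ge0 x; lra.
rewrite quadfE vdotE mulr_suml; apply: ler_sum => i _.
rewrite mxE mulr_sumr mulr_suml; apply: ler_sum => j _.
have hi := sqr_entry_le_sqnorm x i; have hj := sqr_entry_le_sqnorm x j.
rewrite -(real_normK (num_real (x i 0))) in hi.
rewrite -(real_normK (num_real (x j 0))) in hj.
have hxx : `|x i 0| * `|x j 0| <= sqnorm x.
  have := sqr_ge0 (`|x i 0| - `|x j 0|); nra.
apply: le_trans (ler_norm _) _; rewrite !normrM mulrCA.
by apply: ler_wpM2l => //; rewrite mulrC.
Qed.

End RealVectorDot.

Section Coercivity.
Variable R : realFieldType.

Definition qform n (a : 'I_n -> 'I_n -> R) (v : 'I_n -> R) : R :=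
  \sum_i \sum_j v i * a i j * v j.

Lemma quadf_qform n (M : 'M[R]_n) x :
  quadf M x = qform (fun i j => M i j) (fun i => x i 0).
Proof.
rewrite quadfE vdotE; apply: eq_bigr => i _; rewrite mxE mulr_sumr.
by apply: eq_bigr => j _; rewrite mulrA.
Qed.

Definition vcons n (v0 : R) (u : 'I_n -> R) : 'I_n.+1 -> R :=
  fun i => if unlift ord0 i is Some j then u j else v0.

Lemma vcons0 n v0 (u : 'I_n -> R) : vcons v0 u ord0 = v0.
Proof. by rewrite /vcons unlift_none. Qed.

Lemma vcons_lift n v0 (u : 'I_n -> R) : (fun j => vcons v0 u (lift ord0 j)) = u.
Proof. by apply: funext => j; rewrite /vcons liftK. Qed.

Section SplitFirstCoordinate.
Variables (n : nat) (a : 'I_n.+1 -> 'I_n.+1 -> R).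

Let a00 := a ord0 ord0.
Definition qcross (j : 'I_n) := (a ord0 (lift ord0 j) + a (lift ord0 j) ord0) / 2.
Definition qtail (i j : 'I_n) := a (lift ord0 i) (lift ord0 j).
Definition qschur (i j : 'I_n) := qtail i j - qcross i * qcross j / a00.
Let L (u : 'I_n -> R) := \sum_j qcross j * u j.

Lemma qform_recl (v : 'I_n.+1 -> R) : qform a v =
  a00 * v ord0 ^+ 2 + 2 * v ord0 * L (fun j => v (lift ord0 j))
  + qform qtail (fun j => v (lift ord0 j)).
Proof.
rewrite /qform big_ord_recl big_ord_recl /=.
have -> : \sum_(i < n) \sum_(j < n.+1) v (lift ord0 i) * a (lift ord0 i) j * v j
  = \sum_(i < n) v (lift ord0 i) * a (lift ord0 i) ord0 * v ord0
    + \sum_(i < n) \sum_(j < n) v (lift ord0 i) * qtail i j * v (lift ord0 j).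
  by rewrite -big_split; apply: eq_bigr => i _; rewrite big_ord_recl.
rewrite !addrA; congr (_ + _).
rewrite /L mulr_sumr -addrA -big_split /=; congr (_ + _).
  by rewrite /a00 expr2; ring.
by apply: eq_bigr => j _; rewrite /qcross; field.
Qed.

Lemma qform_schur (v : 'I_n.+1 -> R) : a00 != 0 ->
  qform a v = a00 * (v ord0 + L (fun j => v (lift ord0 j)) / a00) ^+ 2
              + qform qschur (fun j => v (lift ord0 j)).
Proof.
move=> a00_neq0; rewrite qform_recl.
set u := fun j => v (lift ord0 j).
have -> : qform qschur u = qform qtail u - L u ^+ 2 / a00.
  have -> : L u ^+ 2 / a00 = \sum_i \sum_j u i * (qcross i * qcross j / a00) * u j.
    rewrite expr2 /L !mulr_suml; apply: eq_bigr => i _.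
    rewrite mulr_sumr mulr_suml; apply: eq_bigr => j _; by field.
  rewrite /qform -sumrB; apply: eq_bigr => i _.
  by rewrite -sumrB; apply: eq_bigr => j _; rewrite /qschur; ring.
by field.
Qed.

Lemma qform_pos_schur :
  (forall v, (exists i, v i != 0) -> 0 < qform a v) ->
  0 < a00 /\ forall u, (exists i, u i != 0) -> 0 < qform qschur u.
Proof.
move=> apos.
have a00_gt0 : 0 < a00.
  have := apos (vcons 1 (fun=> 0)); rewrite qform_recl vcons0 vcons_lift.
  have -> : L (fun=> 0) = 0 by rewrite /L big1 // => j _; rewrite mulr0.
  have -> : qform qtail (fun=> 0) = 0.
    by rewrite /qform big1 // => i _; rewrite big1 // => j _; rewrite !mul0r.
  by rewrite expr1n !mulr0 mulr1 !addr0; apply; exists ord0; rewrite vcons0 oner_eq0.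
split=> // u [i ui].
have := apos (vcons (- L u / a00) u).
rewrite qform_schur ?gt_eqF // vcons0 vcons_lift mulNr addNr expr0n /=.
by rewrite mulr0 add0r; apply; exists (lift ord0 i); rewrite /vcons liftK.
Qed.

End SplitFirstCoordinate.

Lemma shifted_square_lower_bound (a e c v0 t U S : R) : 0 < a -> 0 < e -> 0 <= c ->
  0 <= U -> t ^+ 2 <= c * U -> e * U <= S ->
  (2 / a + (2 * c + 1) / e)^-1 * (v0 ^+ 2 + U) <= a * (v0 + t) ^+ 2 + S.
Proof.
move=> a_gt0 e_gt0 c_ge0 U_ge0 htU heU.
set X := (v0 + t) ^+ 2; set K := 2 * c + 1; set D := 2 / a + K / e.
have X_ge0 : 0 <= X by rewrite sqr_ge0.
have K_gt0 : 0 < K by rewrite /K; lra.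
have D_gt0 : 0 < D by rewrite addr_gt0 ?divr_gt0.
have hv : v0 ^+ 2 + U <= 2 * X + K * U.
  by have := sqr_ge0 (v0 + 2 * t); rewrite /X /K; nra.
have hD : 2 * X + K * U <= D * (a * X + e * U).
  have -> : D * (a * X + e * U) = 2 * X + K * U + (2 / a * (e * U) + K / e * (a * X)).
    by rewrite /D; field; rewrite !gt_eqF.
  have := mulr_ge0 (divr_ge0 (ler0n _ 2) (ltW a_gt0)) (mulr_ge0 (ltW e_gt0) U_ge0).
  have := mulr_ge0 (divr_ge0 (ltW K_gt0) (ltW e_gt0)) (mulr_ge0 (ltW a_gt0) X_ge0).
  lra.
rewrite -(ler_pM2l D_gt0) mulrA mulfV ?gt_eqF // mul1r.
apply: le_trans hv (le_trans hD _).
by rewrite ler_pM2l // lerD2l.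
Qed.

Lemma qform_coercive n (a : 'I_n -> 'I_n -> R) :
  (forall v, (exists i, v i != 0) -> 0 < qform a v) ->
  exists2 e : R, 0 < e & forall v, e * \sum_i v i ^+ 2 <= qform a v.
Proof.
elim: n a => [|n IH] a apos.
  by exists 1 => // v; rewrite big_ord0 /qform big_ord0 mulr0.
have [a00_gt0 schur_pos] := qform_pos_schur apos.
have [e e_gt0 He] := IH _ schur_pos.
set c := \sum_j qcross a j ^+ 2; set k := c / a ord0 ord0 ^+ 2.
have k_ge0 : 0 <= k by rewrite divr_ge0 ?sqr_ge0 // sumr_ge0 // => j _; rewrite sqr_ge0.
exists (2 / a ord0 ord0 + (2 * k + 1) / e)^-1.
  by rewrite invr_gt0 addr_gt0 ?divr_gt0 //; lra.
move=> v; rewrite big_ord_recl qform_schur ?gt_eqF //.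
set u := fun j => v (lift ord0 j); set L := \sum_j qcross a j * u j.
apply: shifted_square_lower_bound => //.
- by rewrite sumr_ge0 // => j _; rewrite sqr_ge0.
- rewrite /k expr_div_n [leRHS]mulrAC ler_pM2r ?invr_gt0 ?exprn_gt0 //.
  exact: sqr_sum_mul_le.
Qed.

Lemma posdef_coercive n (M : 'M[R]_n) : (forall x, x != 0 -> 0 < quadf M x) ->
  exists2 e : R, 0 < e & forall x, e * sqnorm x <= quadf M x.
Proof.
move=> Mpos.
have [e e_gt0 He] : exists2 e : R, 0 < e &
    forall v, e * \sum_i v i ^+ 2 <= qform (fun i j => M i j) v.
  apply: qform_coercive => v [i vi]; have := Mpos (\col_j v j).
  rewrite quadf_qform.
  have -> : (fun k => (\col_j v j) k 0) = v by apply: funext => k; rewrite mxE.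
  by apply; apply: contra_neq vi => /matrixP/(_ i 0); rewrite !mxE.
exists e => // x; rewrite quadf_qform /sqnorm vdotE.
under eq_bigr do rewrite -expr2.
exact: He.
Qed.

Lemma posdef_unitmx n (P : 'M[R]_n) : posdef P -> P \in unitmx.
Proof.
case=> Psym Ppos; rewrite -row_free_unit -kermx_eq0.
apply/negPn/negP => /rowV0Pn [v /sub_kermxP vP v0].
have : 0 < quadf P v^T.
  by apply: Ppos; apply: contra v0 => /eqP h; apply/eqP; rewrite -(trmxK v) h trmx0.
by rewrite quadfE -Psym -trmx_mul vP trmx0 vdot0r ltxx.
Qed.

Lemma posdef_quadf_ge0 n (M : 'M[R]_n) : posdef M -> forall x, 0 <= quadf M x.
Proof.
case=> _ /posdef_coercive [c c_gt0 hc] x.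
by apply: le_trans (hc x); rewrite mulr_ge0 ?sqnorm_ge0 // ltW.
Qed.

Lemma quadf_invmx n (P : 'M[R]_n) x : P^T = P -> P \in unitmx ->
  quadf (invmx P) x = quadf P (invmx P *m x).
Proof.
move=> Psym uP; rewrite -quadf_mulmx trmx_inv Psym.
by rewrite -mulmxA mulmxV ?mulmx1.
Qed.

Lemma posdef_invmx n (P : 'M[R]_n) : posdef P -> posdef (invmx P).
Proof.
move=> hP; have uP := posdef_unitmx hP; case: hP => Psym Ppos.
split=> [|x x_neq0]; first by rewrite trmx_inv Psym.
rewrite quadf_invmx //; apply: Ppos.
by apply: contra_neq x_neq0 => /(congr1 (mulmx P)); rewrite mulKVmx // mulmx0.
Qed.

End Coercivity.

Section Kronecker.
Variable R : comPzRingType.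

Lemma sum_mxtens m n (F : 'I_(m * n) -> R) :
  \sum_k F k = \sum_(i < m) \sum_(j < n) F (mxtens_index (i, j)).
Proof.
rewrite pair_big /= (reindex (@mxtens_index m n)) /=; last first.
  exists (@mxtens_unindex m n) => k _; first exact: mxtens_indexK.
  exact: mxtens_unindexK.
by apply: eq_bigr => -[].
Qed.

Lemma kronvE m a b (v : 'cV[R]_m) (A : 'M[R]_(a, b)) i k j :
  kronv v A (mxtens_index (i, k)) j = v i 0 * A k j.
Proof.
rewrite /kronv /kron castmxE /= cast_ord_id.
have -> : cast_ord (esym (mul1n b)) j = mxtens_index (ord0, j).
  by apply: val_inj; rewrite /= mul0n add0n.
by rewrite tensmxE.
Qed.

Lemma kronv_mulmx m a b c (v : 'cV[R]_m) (A : 'M[R]_(a, b)) (B : 'M[R]_(b, c)) :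
  kronv v A *m B = kronv v (A *m B).
Proof.
apply/matrixP => r j; case: (mxtens_indexP r) => i k.
rewrite mxE kronvE mxE mulr_sumr; apply: eq_bigr => l _; by rewrite kronvE mulrA.
Qed.

Lemma kronvDr m a b (v : 'cV[R]_m) (A B : 'M[R]_(a, b)) :
  kronv v (A + B) = kronv v A + kronv v B.
Proof.
apply/matrixP => r j; case: (mxtens_indexP r) => i k.
by rewrite mxE !kronvE mxE mulrDr.
Qed.

Lemma kron_mul_kronv m m' a a' b (M : 'M[R]_(m, m')) (A : 'M[R]_(a, a'))
  (v : 'cV[R]_m') (B : 'M[R]_(a', b)) :
  kron M A *m kronv v B = kronv (M *m v) (A *m B).
Proof.
apply/matrixP => r j; case: (mxtens_indexP r) => i k.
rewrite mxE kronvE !mxE sum_mxtens mulr_suml; apply: eq_bigr => i' _.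
rewrite mulr_sumr; apply: eq_bigr => k' _.
by rewrite tensmxE kronvE; ring.
Qed.

Lemma kron1mx1 m n : kron (1%:M : 'M[R]_m) (1%:M : 'M[R]_n) = 1%:M.
Proof.
apply/matrixP => r c; case: (mxtens_indexP r) => i k; case: (mxtens_indexP c) => i' k'.
rewrite tensmxE !mxE -natrM mulnb.
by rewrite (inj_eq (can_inj (@mxtens_indexK m n))) xpair_eqE.
Qed.

Lemma trmx_kronv_mul_kron1mx n np N (p : 'cV[R]_np) (B : 'M[R]_(n, N)) :
  (kronv p (1%:M : 'M[R]_n))^T *m kron (1%:M : 'M[R]_np) B =
  B *m (kronv p (1%:M : 'M[R]_N))^T.
Proof.
apply: trmx_inj; rewrite !trmx_mul !trmxK /kron trmx_tens !trmx1.
by rewrite -/(kron _ _) kron_mul_kronv kronv_mulmx mul1mx mulmx1 mul1mx.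
Qed.

Definition schedmx n np (p : 'cV[R]_np) : 'M[R]_(n + np * n, n) :=
  col_mx 1%:M (kronv p 1%:M).

Lemma schedmx_mul n np (p : 'cV[R]_np) (a : 'cV[R]_n) :
  schedmx n p *m a = col_mx a (kronv p a).
Proof. by rewrite mul_col_mx mul1mx kronv_mulmx mul1mx. Qed.

End Kronecker.

Section AffineDependence.
Variable R : comPzRingType.

Definition rowblocks np a b (Mi : 'I_np -> 'M[R]_(a, b)) : 'M[R]_(a, np * b) :=
  \matrix_(r, c) Mi (mxtens_unindex c).1 r (mxtens_unindex c).2.

Lemma rowblocks_colblock nu np nx (M : 'M[R]_(nu, np * nx)) :
  rowblocks (colblock M) = M.
Proof. by apply/matrixP => r c; rewrite !mxE -surjective_pairing mxtens_unindexK. Qed.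

Lemma rowblocks_mul_kronv np a b c (Mi : 'I_np -> 'M[R]_(a, b)) p (M : 'M[R]_(b, c)) :
  rowblocks Mi *m kronv p M = \sum_i p i 0 *: (Mi i *m M).
Proof.
apply/matrixP => r j; rewrite mxE summxE sum_mxtens; apply: eq_bigr => i _.
rewrite !mxE mulr_sumr; apply: eq_bigr => k _.
by rewrite kronvE mxE mxtens_indexK /=; ring.
Qed.

Lemma affmx_mulmx m n k np (M0 : 'M[R]_(m, n)) (Mi : 'I_np -> 'M[R]_(m, n)) p
  (B : 'M[R]_(n, k)) :
  affmx M0 Mi p *m B = M0 *m B + rowblocks Mi *m kronv p B.
Proof.
rewrite rowblocks_mul_kronv /affmx mulmxDl mulmx_suml; congr (_ + _).
by apply: eq_bigr => i _; rewrite scalemxAl.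
Qed.

End AffineDependence.

Section DataEquation.
Variables (R : comPzRingType) (nx nu np N : nat).
Variables (A0 : 'M[R]_nx) (Ai : 'I_np -> 'M[R]_nx).
Variables (B0 : 'M[R]_(nx, nu)) (Bi : 'I_np -> 'M[R]_(nx, nu)).

Definition sysmx : 'M[R]_(nx, nx + np * nx + nu + np * nu) :=
  row_mx (row_mx (row_mx A0 (rowblocks Ai)) B0) (rowblocks Bi).

Lemma sysmx_mul_lifted k (p : 'cV[R]_np) (X : 'M[R]_(nx, k)) (U : 'M[R]_(nu, k)) :
  sysmx *m col_mx (col_mx (col_mx X (kronv p X)) U) (kronv p U) =
  affmx A0 Ai p *m X + affmx B0 Bi p *m U.
Proof. by rewrite !mul_row_col !affmx_mulmx !addrA. Qed.

Lemma col_dmx n (v : nat -> 'cV[R]_n) (j : 'I_N) : col j (dmx N v) = v j.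
Proof. by apply/matrixP => r c; rewrite !mxE (ord1 c). Qed.

Lemma col_dmxp n (p : nat -> 'cV[R]_np) (v : nat -> 'cV[R]_n) (j : 'I_N) :
  col j (dmxp N p v) = kronv (p j) (v j).
Proof. by apply/matrixP => r c; rewrite !mxE (ord1 c). Qed.

Lemma Xplus_sysmx_Dp (xd : nat -> 'cV[R]_nx) (ud : nat -> 'cV[R]_nu)
    (pd : nat -> 'cV[R]_np) :
  (forall k, (k < N)%N ->
     xd k.+1 = affmx A0 Ai (pd k) *m xd k + affmx B0 Bi (pd k) *m ud k) ->
  Xplus N xd = sysmx *m Dp N xd ud pd.
Proof.
move=> hD; apply/matrixP => r j.
suff /matrixP/(_ r 0) : col j (Xplus N xd) = col j (sysmx *m Dp N xd ud pd).
  by rewrite !mxE.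
rewrite [RHS]colE -mulmxA -colE /Dp !col_col_mx !col_dmx !col_dmxp.
by rewrite sysmx_mul_lifted -hD.
Qed.

End DataEquation.

Section Controller.
Variable R : comUnitRingType.

Lemma kron1mx_unit m n (A : 'M[R]_n) :
  A \in unitmx -> kron (1%:M : 'M[R]_m) A \in unitmx.
Proof.
move=> uA; suff : kron (1%:M : 'M[R]_m) A *m kron 1%:M (invmx A) = 1%:M.
  by case/mulmx1_unit.
by rewrite /kron tensmx_mul mulmx1 mulmxV // -/(kron _ _) kron1mx1.
Qed.

Definition lpv_gain nx nu np (P : 'M[R]_nx) (Y0 : 'M[R]_(nu, nx))
  (Ybar : 'M[R]_(nu, np * nx)) (p : 'cV[R]_np) : 'M[R]_(nu, nx) :=
  affmx (Y0 *m invmx P) (colblock (Ybar *m invmx (kron (1%:M : 'M[R]_np) P))) p.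

Lemma lpv_gain_mulmx nx nu np (P : 'M[R]_nx) Y0 (Ybar : 'M[R]_(nu, np * nx)) p :
  P \in unitmx -> lpv_gain P Y0 Ybar p *m P = Y0 + Ybar *m kronv p 1%:M.
Proof.
move=> uP; rewrite affmx_mulmx rowblocks_colblock mulmxKV //.
have -> : kronv p P = kron (1%:M : 'M[R]_np) P *m kronv p 1%:M.
  by rewrite kron_mul_kronv mul1mx mulmx1.
by rewrite !mulmxA mulmxKV ?kron1mx_unit.
Qed.

Definition closed_loop nx nu np (A0 : 'M[R]_nx) (Ai : 'I_np -> 'M[R]_nx)
  (B0 : 'M[R]_(nx, nu)) (Bi : 'I_np -> 'M[R]_(nx, nu)) (P : 'M[R]_nx)
  (Y0 : 'M[R]_(nu, nx)) (Ybar : 'M[R]_(nu, np * nx)) (p : 'cV[R]_np) : 'M[R]_nx :=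
  affmx A0 Ai p + affmx B0 Bi p *m lpv_gain P Y0 Ybar p.

End Controller.

Section ClosedLoopIdentity.
Variables (R : realType) (nx nu np N : nat).
Variables (A0 : 'M[R]_nx) (Ai : 'I_np -> 'M[R]_nx).
Variables (B0 : 'M[R]_(nx, nu)) (Bi : 'I_np -> 'M[R]_(nx, nu)).
Variables (xd : nat -> 'cV[R]_nx) (ud : nat -> 'cV[R]_nu) (pd : nat -> 'cV[R]_np).
Hypothesis hD : forall k, (k < N)%N ->
  xd k.+1 = affmx A0 Ai (pd k) *m xd k + affmx B0 Bi (pd k) *m ud k.
Variables (P : 'M[R]_nx) (Y0 : 'M[R]_(nu, nx)) (Ybar : 'M[R]_(nu, np * nx)).
Hypothesis uP : P \in unitmx.
Variables (FQ : 'M[R]_(N + np * N, nx + np * nx))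
  (Fc : 'M[R]_(N, nx + np * nx + np * (np * nx))).
Hypothesis hY : lhs_blk P Y0 Ybar = Dp N xd ud pd *m Fc.

Lemma lhs_blk_mul_sched p : let Yp := Y0 + Ybar *m kronv p 1%:M in
  lhs_blk P Y0 Ybar *m col_mx (schedmx nx p) (kronv p (kronv p 1%:M)) =
  col_mx (col_mx (col_mx P (kronv p P)) Yp) (kronv p Yp).
Proof.
rewrite /lhs_blk !mul_col_mx !mul_row_col !mul0mx !addr0 !add0r !kron_mul_kronv.
by rewrite !mul1mx !mulmx1 kronvDr.
Qed.

Lemma trmx_schedmx_mul_Xcal (Xp : 'M[R]_(nx, N)) p :
  (schedmx nx p)^T *m block_mx Xp 0 0 (kron (1%:M : 'M[R]_np) Xp) =
  Xp *m (schedmx N p)^T.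
Proof.
rewrite /schedmx !tr_col_mx !trmx1 mul_row_block mul_mx_row !mulmx0 !mul1mx.
by rewrite !addr0 add0r trmx_kronv_mul_kron1mx mulmx1.
Qed.

(* On the data X_+ = sysmx D_p, and D_p F_c maps the lifted scheduling vector
   to [P; p (x) P; K(p) P; p (x) K(p) P]. *)
Lemma closed_loop_identity p :
  Fc *m col_mx (schedmx nx p) (kronv p (kronv p 1%:M)) =
    (schedmx N p)^T *m FQ *m schedmx nx p ->
  (schedmx nx p)^T
    *m block_mx (Xplus N xd) 0 0 (kron (1%:M : 'M[R]_np) (Xplus N xd))
    *m FQ *m schedmx nx p
  = closed_loop A0 Ai B0 Bi P Y0 Ybar p *m P.
Proof.
move=> hFc.
rewrite trmx_schedmx_mul_Xcal -!mulmxA [(schedmx N p)^T *m _]mulmxA -hFc.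
rewrite mulmxA (Xplus_sysmx_Dp hD) -(mulmxA (sysmx _ _ _ _)) -hY -mulmxA.
rewrite lhs_blk_mul_sched sysmx_mul_lifted /closed_loop [RHS]mulmxDl -mulmxA.
by rewrite lpv_gain_mulmx.
Qed.

End ClosedLoopIdentity.

Section FullBlockMultiplier.
Variables (R : realType) (nx nu np : nat).

Lemma L12_mul (ab : 'cV[R]_(nx + nx)) (r : 'cV[R]_(nx + nu + nx)) :
  L12 nx nu np *m col_mx ab r = kronv (const_mx 1 : 'cV[R]_np) ab.
Proof. by rewrite /L12 mul_row_col mul0mx addr0 kronv_mulmx mul1mx. Qed.

Lemma Delta_mul_kronv1 (p : 'cV[R]_np) (w : 'cV[R]_(nx + nx)) :
  Delta nx p *m kronv (const_mx 1 : 'cV[R]_np) w = kronv p w.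
Proof.
rewrite /Delta kron_mul_kronv mul1mx; congr kronv.
by apply/matrixP => i j; rewrite mul_diag_mx !mxE mulr1 (ord1 j).
Qed.

Lemma Lup_mul (q : 'cV[R]_(np * (nx + nx))) (v : 'cV[R]_(nx + nx + (nx + nu + nx))) :
  Lup nx nu np *m col_mx q v = col_mx (L12 nx nu np *m v) q.
Proof. by rewrite /Lup mul_block_col /L11 !mul0mx add0r addr0 mul1mx. Qed.

Lemma Llow_mul (p : 'cV[R]_np) (a b : 'cV[R]_nx) (r : 'cV[R]_(nx + nu + nx)) :
  Llow nx nu np *m col_mx (kronv p (col_mx a b)) (col_mx (col_mx a b) r) =
  col_mx (col_mx (schedmx nx p *m a) (schedmx nx p *m b)) r.
Proof.
rewrite /Llow /L21 /L22 !schedmx_mul mul_row_col.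
rewrite !(mul_col_mx, mul_row_col, mul0mx, kron_mul_kronv, mul1mx, mulmx1).
rewrite !(addr0, add0r).
by rewrite !add_col_mx !(addr0, add0r).
Qed.

(* The multiplier condition makes the Xi-part of the LMI nonnegative along
   q = Delta(p) L12 v, so the strict LMI leaves a uniform margin on W. *)
Lemma full_block_margin (Xi : 'M[R]_(np * (nx + nx) + np * (nx + nx)))
    (W : 'M[R]_(nx + np * nx + (nx + np * nx) + (nx + nu + nx))) :
  negdef ((Lup nx nu np)^T *m Xi *m Lup nx nu np
          - (Llow nx nu np)^T *m W *m Llow nx nu np) ->
  exists2 e : R, 0 < e & forall p,
    possemidef ((col_mx 1%:M (Delta nx p))^T *m Xi *m col_mx 1%:M (Delta nx p)) ->
    forall (a b : 'cV[R]_nx) (r : 'cV[R]_(nx + nu + nx)),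
    e * (sqnorm a + sqnorm b + sqnorm r) <=
    quadf W (col_mx (col_mx (schedmx nx p *m a) (schedmx nx p *m b)) r).
Proof.
case=> _ /posdef_coercive [e e_gt0 He]; exists e => // p [_ Xi_ge0] a b r.
set ab := col_mx a b.
have := He (col_mx (kronv p ab) (col_mx ab r)).
rewrite quadfN quadfB opprB !quadf_mulmx Lup_mul Llow_mul L12_mul.
have -> : col_mx (kronv (const_mx 1) ab) (kronv p ab) =
          col_mx 1%:M (Delta nx p) *m kronv (const_mx 1 : 'cV[R]_np) ab.
  by rewrite mul_col_mx mul1mx Delta_mul_kronv1.
rewrite -quadf_mulmx !sqnorm_col_mx.
have := Xi_ge0 (kronv (const_mx 1 : 'cV[R]_np) ab).
have := mulr_ge0 (ltW e_gt0) (sqnorm_ge0 (kronv p ab)).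
rewrite !mulrDr; lra.
Qed.

Lemma quadf_Wmx N gamma (P : 'M[R]_nx) (FQ : 'M[R]_(N + np * N, nx + np * nx)) Xp Qh
    (Rh : 'M[R]_nu) Y0 (Ybar : 'M[R]_(nu, np * nx)) (a b c e : 'cV[R]_nx)
    (d : 'cV[R]_nu) (ka kb : 'cV[R]_(np * nx)) :
  let XF := block_mx Xp 0 0 (kron (1%:M : 'M[R]_np) Xp) *m FQ in
  quadf (Wmx gamma P FQ Xp Qh Rh Y0 Ybar)
    (col_mx (col_mx (col_mx a ka) (col_mx b kb)) (col_mx (col_mx c d) e)) =
  vdot a (P *m a) + 2 * vdot (col_mx b kb) (XF *m col_mx a ka) + vdot b (P *m b)
  + 2 * vdot c (Qh *m P *m a) + 2 * vdot d (Rh *m (Y0 *m a + Ybar *m ka))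
  + 2 * vdot e b + gamma * (sqnorm c + sqnorm d + sqnorm e).
Proof.
move=> XF; rewrite quadfE /Wmx /= -/XF.
rewrite !(tr_row_mx, trmx0, trmx1, mul_block_col, mul_col_mx, mul_row_col).
rewrite !(mul0mx, mulmx0, addr0, add0r, mul1mx, mulmx1, add_col_mx).
rewrite !(vdot_col_mx, vdot0r, addr0) !vdotDr !vdot_col_mx !vdot0r !vdot_trmxC.
rewrite !mul_scalar_mx !vdotZr !addr0 -!mulmxA mul_row_col (vdotC b e) /sqnorm.
ring.
Qed.

End FullBlockMultiplier.

Section EuclideanNorm.
Variable R : rcfType.

Lemma vnormE n (x : 'cV[R]_n) : vnorm x = Num.sqrt (sqnorm x).
Proof. by rewrite /vnorm /sqnorm vdotE; under eq_bigr do rewrite expr2. Qed.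

Lemma sqr_vnorm n (x : 'cV[R]_n) : vnorm x ^+ 2 = sqnorm x.
Proof. by rewrite vnormE sqr_sqrtr // sqnorm_ge0. Qed.

Lemma vnorm_lt n (x : 'cV[R]_n) e : 0 < e -> (vnorm x < e) = (sqnorm x < e ^+ 2).
Proof.
move=> e_gt0; rewrite vnormE -[X in _ < X](ger0_norm (ltW e_gt0)) -sqrtr_sqr.
by rewrite ltr_sqrt // exprn_gt0.
Qed.

End EuclideanNorm.

Section LyapunovStability.
Variables (R : realType) (n : nat) (M : nat -> 'M[R]_n) (V : 'cV[R]_n -> R).
Variables (c C rho : R).
Hypotheses (c_gt0 : 0 < c) (C_gt0 : 0 < C) (rho_ge0 : 0 <= rho) (rho_lt1 : rho < 1).
Hypothesis V_lb : forall x, c * sqnorm x <= V x.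
Hypothesis V_ub : forall x, V x <= C * sqnorm x.
Hypothesis V_decr : forall k x, V (M k *m x) <= rho * V x.

Lemma traj_sqnorm_le x0 k :
  c * sqnorm (traj M (fun=> 0) x0 k) <= rho ^+ k * (C * sqnorm x0).
Proof.
have V_traj : V (traj M (fun=> 0) x0 k) <= rho ^+ k * V x0.
  elim: k => [|k IH] /=; first by rewrite expr0 mul1r.
  rewrite addr0 exprS -mulrA; apply: le_trans (V_decr _ _) _.
  by rewrite ler_wpM2l.
apply: le_trans (V_lb _) (le_trans V_traj _).
by rewrite ler_wpM2l ?exprn_ge0.
Qed.

Lemma lyapunov_asym_stable : asym_stable M.
Proof.
split=> [eps eps_gt0 | ].
  set kap := C / c; have kap_gt0 : 0 < kap by rewrite divr_gt0.
  exists (eps / (1 + kap)) => [|x0]; first by rewrite divr_gt0 // addr_gt0.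
  rewrite !vnorm_lt ?divr_gt0 ?addr_gt0 // => hx0 k.
  have hk : sqnorm (traj M (fun=> 0) x0 k) <= kap * sqnorm x0.
    rewrite /kap mulrAC ler_pdivlMr // mulrC.
    apply: le_trans (traj_sqnorm_le x0 k) _.
    by rewrite ler_piMl ?mulr_ge0 ?sqnorm_ge0 ?(ltW C_gt0) // exprn_ile1 // ltW.
  rewrite vnorm_lt //.
  apply: (le_lt_trans hk); apply: (le_lt_trans (ler_wpM2l (ltW kap_gt0) (ltW hx0))).
  rewrite expr_div_n mulrA ltr_pdivrMr ?exprn_gt0 ?addr_gt0 //.
  have := exprn_gt0 2 eps_gt0; nra.
exists 1 => // x0 _ eps eps_gt0.
have s_ge0 : 0 <= C * sqnorm x0 by rewrite mulr_ge0 ?sqnorm_ge0 // ltW.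
have t_gt0 : 0 < c * eps ^+ 2 / (C * sqnorm x0 + 1).
  by rewrite !divr_gt0 ?mulr_gt0 ?exprn_gt0 // ltr_wpDl.
have : `|rho| < 1 by rewrite ger0_norm.
move=> /cvg_expr /cvgr0_norm_lt /(_ _ t_gt0) [K _ HK].
exists K => k Kk; rewrite vnorm_lt // -(ltr_pM2l c_gt0).
apply: le_lt_trans (traj_sqnorm_le x0 k) _.
have := HK k Kk; rewrite /= ger0_norm ?exprn_ge0 // ltr_pdivlMr ?ltr_wpDl //.
have := exprn_ge0 k rho_ge0; nra.
Qed.

End LyapunovStability.

Section L2Norm.
Variable R : realType.
Local Open Scope ereal_scope.

Lemma l2norm_le_partial_sums n m (z : nat -> 'cV[R]_n) (w : nat -> 'cV[R]_m) (g : R) :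
  (0 <= g)%R ->
  (forall K, \sum_(k < K) sqnorm (z k) <= g ^+ 2 * \sum_(k < K) sqnorm (w k))%R ->
  l2norm z <= g%:E * l2norm w.
Proof.
move=> g_ge0 hK; rewrite /l2norm.
have w_ge0 k : 0 <= ((vnorm (w k)) ^+ 2)%:E by rewrite lee_fin sqr_ge0.
have Sw_ge0 : 0 <= \sum_(0 <= k <oo) ((vnorm (w k)) ^+ 2)%:E.
  by apply: nneseries_ge0 => k _ _.
have -> : g%:E = sqrte ((g ^+ 2)%:E) by rewrite /= sqrtr_sqr ger0_norm.
rewrite -sqrteM ?lee_fin ?exprn_ge0 // lee_sqrt; last first.
  by rewrite mule_ge0 ?lee_fin ?exprn_ge0.
apply: lime_le; first by apply: is_cvg_nneseries => k _ _; rewrite lee_fin sqr_ge0.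
apply: nearW => K /=; rewrite sumEFin big_mkord.
under eq_bigr do rewrite sqr_vnorm.
apply: le_trans (_ : (g ^+ 2)%:E * (\sum_(k < K) sqnorm (w k))%:E <= _).
  by rewrite -EFinM lee_fin.
apply: lee_wpmul2l; first by rewrite lee_fin exprn_ge0.
have := @nneseries_lim_ge R (fun k => ((vnorm (w k)) ^+ 2)%:E) xpredT 0 K.
rewrite sumEFin big_mkord; under eq_bigr do rewrite sqr_vnorm.
by apply => k _ _.
Qed.

End L2Norm.

Section StrictDissipation.
Variables (R : realType) (n np nz : nat) (Pset : set 'cV[R]_np).
Variables (A : 'cV[R]_np -> 'M[R]_n) (C : 'cV[R]_np -> 'M[R]_(nz, n)).
Variables (X : 'M[R]_n) (gamma e : R).
Hypotheses (hX : posdef X) (gamma_gt0 : 0 < gamma) (e_gt0 : 0 < e).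
Hypothesis dissipation : forall p, Pset p -> forall x w,
  quadf X (A p *m x + w) + (gamma^-1 + e) * sqnorm (C p *m x) + e * quadf X x
  <= quadf X x + gamma * sqnorm w.

Lemma dissipation_contraction p x :
  Pset p -> quadf X (A p *m x) <= (1 - Num.min e 1) * quadf X x.
Proof.
move=> Pp; have := dissipation Pp x 0.
rewrite addr0 sqnorm0 mulr0 addr0.
have a_gt0 : 0 < gamma^-1 + e by rewrite addr_gt0 ?invr_gt0.
have := mulr_ge0 (ltW a_gt0) (sqnorm_ge0 (C p *m x)).
have min_le : Num.min e 1 <= e by rewrite ge_min lexx.
have := ler_wpM2r (posdef_quadf_ge0 hX x) min_le.
rewrite mulrBl mul1r; lra.
Qed.

Lemma dissipation_asym_stable p :
  (forall k, Pset (p k)) -> asym_stable (fun k => A (p k)).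
Proof.
move=> Pp; have [c c_gt0 hc] := posdef_coercive (proj2 hX).
have [C' C'_gt0 hC'] := quadf_le_sqnorm X.
apply: (lyapunov_asym_stable (rho := 1 - Num.min e 1) c_gt0 C'_gt0 _ _ hc hC').
- by rewrite subr_ge0 ge_min lexx orbT.
- by rewrite ltrBlDr ltrDl lt_min e_gt0 ltr01.
- move=> k x; exact: dissipation_contraction.
Qed.

Lemma dissipation_energy_le (p : nat -> 'cV[R]_np) (w : nat -> 'cV[R]_n) K :
  (forall k, Pset (p k)) ->
  (gamma^-1 + e) * \sum_(k < K) sqnorm (C (p k) *m traj (fun k => A (p k)) w 0 k)
  + quadf X (traj (fun k => A (p k)) w 0 K) <= gamma * \sum_(k < K) sqnorm (w k).
Proof.
move=> Pp; set x := traj _ w 0; elim: K => [|K IH].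
  by rewrite !big_ord0 !mulr0 add0r /x /= quadfE vdot0l.
rewrite !big_ord_recr /=.
have := dissipation (Pp K) (x K) (w K).
have := mulr_ge0 (ltW e_gt0) (posdef_quadf_ge0 hX (x K)).
rewrite -/(x K.+1); move: IH; rewrite !mulrDr; lra.
Qed.

Lemma dissipation_l2_gain_lt : (l2_gain Pset A C < gamma%:E)%E.
Proof.
set g := Num.sqrt (gamma / (gamma^-1 + e)).
have a_gt0 : 0 < gamma^-1 + e by rewrite addr_gt0 ?invr_gt0.
have g2_gt0 : 0 < gamma / (gamma^-1 + e) by rewrite divr_gt0.
have g_gt0 : 0 < g by rewrite sqrtr_gt0.
have g_lt : g < gamma.
  rewrite /g -[X in _ < X](ger0_norm (ltW gamma_gt0)) -sqrtr_sqr ltr_sqrt ?exprn_gt0 //.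
  rewrite ltr_pdivrMr // expr2 mulrDr -mulrA mulfV ?gt_eqF // mulr1.
  by rewrite ltrDl !mulr_gt0.
apply: (@le_lt_trans _ _ g%:E); last by rewrite lte_fin.
apply: ereal_inf_lbound; exists g => //; split => // p w Pp.
apply: l2norm_le_partial_sums (ltW g_gt0) _ => K.
have := dissipation_energy_le w K Pp.
have := posdef_quadf_ge0 hX (traj (fun k => A (p k)) w 0 K).
rewrite /g sqr_sqrtr ?(ltW g2_gt0) // mulrAC ler_pdivlMr // => ? ?; lra.
Qed.

End StrictDissipation.

Section LMIDissipation.
Variables (R : realType) (nx nu np N : nat) (Pset : set 'cV[R]_np).
Variables (A0 : 'M[R]_nx) (Ai : 'I_np -> 'M[R]_nx).
Variables (B0 : 'M[R]_(nx, nu)) (Bi : 'I_np -> 'M[R]_(nx, nu)).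
Variables (xd : nat -> 'cV[R]_nx) (ud : nat -> 'cV[R]_nu) (pd : nat -> 'cV[R]_np).
Hypothesis hD : forall k, (k < N)%N ->
  xd k.+1 = affmx A0 Ai (pd k) *m xd k + affmx B0 Bi (pd k) *m ud k.
Variables (gamma : R) (Qh : 'M[R]_nx) (Rh : 'M[R]_nu).
Hypothesis gamma_gt0 : 0 < gamma.
Variables (P : 'M[R]_nx) (Xi : 'M[R]_(np * (nx + nx) + np * (nx + nx))).
Hypothesis hP : posdef P.
Variables (FQ : 'M[R]_(N + np * N, nx + np * nx))
  (Fc : 'M[R]_(N, nx + np * nx + np * (np * nx))).
Hypothesis hFc : forall p, Pset p ->
  Fc *m col_mx (schedmx nx p) (kronv p (kronv p 1%:M)) =
  (schedmx N p)^T *m FQ *m schedmx nx p.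
Variables (Y0 : 'M[R]_(nu, nx)) (Ybar : 'M[R]_(nu, np * nx)).
Hypothesis hY : lhs_blk P Y0 Ybar = Dp N xd ud pd *m Fc.
Hypothesis hLMI1 : negdef ((Lup nx nu np)^T *m Xi *m Lup nx nu np
  - (Llow nx nu np)^T *m Wmx gamma P FQ (Xplus N xd) Qh Rh Y0 Ybar *m Llow nx nu np).
Hypothesis hLMI2 : forall p, Pset p ->
  possemidef ((col_mx 1%:M (Delta nx p))^T *m Xi *m col_mx 1%:M (Delta nx p)).

Local Notation K := (lpv_gain P Y0 Ybar).
Local Notation Acl := (closed_loop A0 Ai B0 Bi P Y0 Ybar).
Local Notation Cz := (fun p => col_mx Qh (Rh *m K p)).

Let P_unit : P \in unitmx := posdef_unitmx hP.

Lemma lmi_quadratic_bound : exists2 e0 : R, 0 < e0 & forall p, Pset p ->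
  forall (a b c w : 'cV[R]_nx) (d : 'cV[R]_nu),
  e0 * (sqnorm a + sqnorm b + sqnorm c + sqnorm d + sqnorm w) <=
  vdot a (P *m a) + 2 * vdot b (Acl p *m (P *m a)) + vdot b (P *m b)
  + 2 * vdot c (Qh *m (P *m a)) + 2 * vdot d (Rh *m (K p *m (P *m a)))
  + 2 * vdot w b + gamma * (sqnorm c + sqnorm d + sqnorm w).
Proof.
have [e0 e0_gt0 He0] := full_block_margin hLMI1.
exists e0 => // p Pp a b c w d.
have := He0 p (hLMI2 Pp) a b (col_mx (col_mx c d) w).
rewrite !schedmx_mul quadf_Wmx -!schedmx_mul.
set XF := block_mx _ _ _ _ *m FQ.
have -> : vdot (schedmx nx p *m b) (XF *m (schedmx nx p *m a)) =
          vdot b (Acl p *m (P *m a)).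
  by rewrite vdotC -vdot_trmxC !mulmxA (closed_loop_identity hD P_unit hY (hFc Pp)).
have -> : Y0 *m a + Ybar *m kronv p a = K p *m P *m a.
  by rewrite lpv_gain_mulmx // mulmxDl -mulmxA kronv_mulmx mul1mx.
rewrite -!mulmxA vdotC !sqnorm_col_mx !mulrDr; lra.
Qed.

(* Test the bound at a = P^-1 x, b = -P^-1 x_+, (c, d) = -gamma^-1 z and w:
   the cross terms recombine into V(x_+). *)
Lemma lmi_dissipation_margin : exists2 e0 : R, 0 < e0 & forall p, Pset p ->
  forall x w,
  e0 * (sqnorm (invmx P *m x) + gamma^-1 ^+ 2 * sqnorm (Cz p *m x)) <=
  quadf (invmx P) x - quadf (invmx P) (Acl p *m x + w) - gamma^-1 * sqnorm (Cz p *m x)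
  + gamma * sqnorm w.
Proof.
have [e0 e0_gt0 Hb] := lmi_quadratic_bound.
exists e0 => // p Pp x w; set x' := Acl p *m x + w.
set y := invmx P *m x; set y' := invmx P *m x'; set gi := gamma^-1.
have Py : P *m y = x by rewrite mulKVmx.
have Py' : P *m y' = x' by rewrite mulKVmx.
have := Hb p Pp y (- y') (- gi *: (Qh *m x)) w (- gi *: (Rh *m (K p *m x))).
rewrite !Py mulmxN Py' !sqnormN !sqnormZ sqrrN.
rewrite !(vdotNl, vdotNr, vdotZl, vdotZr) opprK.
rewrite mul_col_mx sqnorm_col_mx -mulmxA !quadfE -/y -/y' (vdotC x) (vdotC x').
have hV : vdot y' x' = vdot y' (Acl p *m x) + vdot w y'.
  by rewrite /x' vdotDr (vdotC y' w).
have hg u : gamma * (gi ^+ 2 * u) = gi * u.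
  by rewrite mulrA expr2 mulrA mulfV ?gt_eqF ?mul1r.
have := hg (sqnorm (Qh *m x)); have := hg (sqnorm (Rh *m (K p *m x))).
have := mulr_ge0 (ltW e0_gt0) (sqnorm_ge0 y').
have := mulr_ge0 (ltW e0_gt0) (sqnorm_ge0 w).
rewrite /sqnorm; lra.
Qed.

Lemma lmi_dissipation : exists2 e : R, 0 < e & forall p, Pset p -> forall x w,
  quadf (invmx P) (Acl p *m x + w) + (gamma^-1 + e) * sqnorm (Cz p *m x)
  + e * quadf (invmx P) x <= quadf (invmx P) x + gamma * sqnorm w.
Proof.
have [e0 e0_gt0 Hs] := lmi_dissipation_margin.
have [c c_gt0 Hc] := quadf_le_sqnorm P.
have g2_gt0 : 0 < gamma ^+ 2 by rewrite exprn_gt0.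
set e := e0 / (c + gamma ^+ 2).
have e_gt0 : 0 < e by rewrite divr_gt0 // addr_gt0.
exists e => // p Pp x w.
have hV : quadf (invmx P) x <= c * sqnorm (invmx P *m x).
  by rewrite quadf_invmx ?(proj1 hP).
have hec : e * c <= e0.
  by rewrite /e mulrAC ler_pdivrMr ?addr_gt0 // ler_pM2l // lerDl ltW.
have heg : e <= e0 * gamma^-1 ^+ 2.
  rewrite /e exprVn ler_pM2l // lef_pV2 ?posrE ?addr_gt0 //.
  by rewrite lerDr ltW.
have := Hs p Pp x w.
have := ler_wpM2l (ltW e_gt0) hV.
have := ler_wpM2r (sqnorm_ge0 (invmx P *m x)) hec.
have := ler_wpM2r (sqnorm_ge0 (Cz p *m x)) heg.
rewrite !mulrDr /=; lra.
Qed.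

End LMIDissipation.

Theorem theorem6 (R : realType) (nx nu np N : nat)
  (* scheduling set: compact and convex *)
  (Pset : set 'cV[R]_np)
  (hPc : compact Pset) (hPv : convex_set (Pset : set (convex_lmodType 'cV[R]_np)))
  (* unknown system matrices A(p) = A0 + sum p_i A_i, B(p) = B0 + sum p_i B_i *)
  (A0 : 'M[R]_nx) (Ai : 'I_np -> 'M[R]_nx)
  (B0 : 'M[R]_(nx, nu)) (Bi : 'I_np -> 'M[R]_(nx, nu))
  (* data set, samples 0..N (N = N_d - 1) *)
  (xd : nat -> 'cV[R]_nx) (ud : nat -> 'cV[R]_nu) (pd : nat -> 'cV[R]_np)
  (hD : forall k, (k < N)%N -> Pset (pd k) /\
          xd k.+1 = affmx A0 Ai (pd k) *m xd k + affmx B0 Bi (pd k) *m ud k)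
  (hrank : \rank (Dp N xd ud pd) = ((1 + np) * (nx + nu))%N)
  (* gamma, Q, R and their square roots *)
  (gamma : R) (hgamma : 0 < gamma)
  (Q : 'M[R]_nx) (hQ : possemidef Q) (Rw : 'M[R]_nu) (hR : posdef Rw)
  (Qh : 'M[R]_nx) (hQh : possemidef Qh /\ Qh *m Qh = Q)
  (Rh : 'M[R]_nu) (hRh : posdef Rh /\ Rh *m Rh = Rw)
  (* decision variables *)
  (P : 'M[R]_nx) (hP : posdef P)
  (Xi : 'M[R]_(np * (nx + nx) + np * (nx + nx))) (hXi : Xi^T = Xi)
  (FQ : 'M[R]_(N + np * N, nx + np * nx))
  (Fc : 'M[R]_(N, nx + np * nx + np * (np * nx)))
  (hFc : forall p, Pset p ->
     Fc *m col_mx (col_mx (1%:M : 'M[R]_nx) (kronv p (1%:M : 'M[R]_nx)))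
                  (kronv p (kronv p (1%:M : 'M[R]_nx)))
     = (col_mx (1%:M : 'M[R]_N) (kronv p (1%:M : 'M[R]_N)))^T *m FQ
         *m col_mx (1%:M : 'M[R]_nx) (kronv p (1%:M : 'M[R]_nx)))
  (Y0 : 'M[R]_(nu, nx)) (Ybar : 'M[R]_(nu, np * nx))
  (hY : lhs_blk P Y0 Ybar = Dp N xd ud pd *m Fc)
  (* full-block LMI conditions *)
  (hLMI1 : negdef ((Lup nx nu np)^T *m Xi *m Lup nx nu np
             - (Llow nx nu np)^T *m Wmx gamma P FQ (Xplus N xd) Qh Rh Y0 Ybar
                 *m Llow nx nu np))
  (hLMI2 : forall p, Pset p ->
     possemidef ((col_mx 1%:M (Delta nx p))^T *m Xi *m col_mx 1%:M (Delta nx p))) :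
  let K0 := Y0 *m invmx P in
  let Kbar := Ybar *m invmx (kron (1%:M : 'M[R]_np) P) in
  let K := fun p : 'cV[R]_np => affmx K0 (colblock Kbar) p in
  let Acl := fun p : 'cV[R]_np => affmx A0 Ai p + affmx B0 Bi p *m K p in
  (* K(p) stabilizes the LPV system for all scheduling trajectories in Pset *)
  (forall p : nat -> 'cV[R]_np, (forall k, Pset (p k)) ->
     asym_stable (fun k => Acl (p k)))
  /\
  (* the closed-loop generalized plant has l2-gain less than gamma *)
  (l2_gain Pset Acl (fun p => col_mx Qh (Rh *m K p)) < gamma%:E)%E.
Proof.
move=> K0 Kbar K Acl.
have hsys k (hk : (k < N)%N) := proj2 (hD k hk).
have [e e_gt0 hdiss] := lmi_dissipation hsys hgamma hP hFc hY hLMI1 hLMI2.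
have hX := posdef_invmx hP.
split=> [p Pp|]; first exact: dissipation_asym_stable hX hgamma e_gt0 hdiss p Pp.
exact: dissipation_l2_gain_lt hX hgamma e_gt0 hdiss.
Qed.
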